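(* For all integers $u\ge5$, $$9\,T_{24}^{(3\cdot 2^u)}\equiv T_0+2^{u-3}T_1\pmod{2^u},$$ where $T_0=\mathrm{Toepl}\big((0,0,0,0,0,0,0,0,1,0,0,0,0,0,0,0,2,0,0,0,0,0,0,0),\,(0,0,0,0,0,0,0,-1,0,0,0,0,0,0,0,-2,0,0,0,0,0,0,0)\big)$ and $T_1=\mathrm{Toepl}\big((3,0,0,0,4,0,0,0,3,0,4,0,6,0,4,0,4,0,4,0,6,0,4,0),\,(0,0,0,4,0,0,0,2,0,4,0,2,0,4,0,1,0,4,0,2,0,4,0)\big)$.
   Context: For integers $k,i\ge0$, $T_k^{(i)}$ is the $k\times k$ integer matrix $\big(\sum_{\alpha\in\mathbb{Z}}\alpha\binom{i}{\alpha k+r-s}\big)_{1\le r,s\le k}$, with $\binom{a}{b}=0$ if $b<0$ or $b>a$. For a $k$-tuple $S_1=(u_0,u_1,\dots,u_{k-1})$ and a $(k-1)$-tuple $S_2=(u_{-1},u_{-2},\dots,u_{-(k-1)})$, $\mathrm{Toepl}(S_1,S_2)$ is the $k\times k$ matrix whose $(r,s)$ entry is $u_{r-s}$. Congruence of matrices is entrywise. *)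

From mathcomp Require Import all_boot all_order all_algebra.
Set Implicit Arguments. Unset Strict Implicit. Unset Printing Implicit Defensive.
Import Order.TTheory GRing.Theory Num.Theory.
Local Open Scope ring_scope.

Definition binz (a : nat) (b : int) : int :=
  if (b < 0)%R then 0 else ('C(a, `|b|%N))%:Z.

(* T_k^(i)(r,s) = sum_{alpha in Z} alpha * binom(i, alpha*k + r - s).
   Only alpha with 0 <= alpha*k + r - s <= i contribute; for |r - s| < k this
   forces |alpha| <= i + 1, so the sum over alpha in [-(i+1), i+1] is the
   full sum over Z. *)
Definition Tmat (k i : nat) : 'M[int]_k :=
  \matrix_(r < k, s < k)
    \sum_(0 <= t < (i + 1).*2.+1)
      let alpha : int := t%:Z - (i + 1)%:Z in
      alpha * binz i (alpha * k%:Z + r%:Z - s%:Z).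

(* Toepl(S1, S2)(r,s) = u_{r-s}, with S1 = (u_0,...,u_{k-1}),
   S2 = (u_{-1},...,u_{-(k-1)}). *)
Definition Toepl (k : nat) (S1 S2 : seq int) : 'M[int]_k :=
  \matrix_(r < k, s < k)
    if (s <= r)%N then nth 0 S1 (r - s) else nth 0 S2 (s - r).-1.

Definition mx_congr (k : nat) (m : int) (A B : 'M[int]_k) : Prop :=
  forall r s, (A r s = B r s %[mod m])%Z.

Definition T0 : 'M[int]_24 :=
  Toepl 24 [:: 0;0;0;0;0;0;0;0;1;0;0;0;0;0;0;0;2;0;0;0;0;0;0;0]
           [:: 0;0;0;0;0;0;0;-1;0;0;0;0;0;0;0;-2;0;0;0;0;0;0;0].

Definition T1 : 'M[int]_24 :=
  Toepl 24 [:: 3;0;0;0;4;0;0;0;3;0;4;0;6;0;4;0;4;0;4;0;6;0;4;0]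
           [:: 0;0;0;4;0;0;0;2;0;4;0;2;0;4;0;1;0;4;0;2;0;4;0].

From mathcomp Require Import all_boot all_order all_algebra.
From mathcomp Require Import zify ring.
Set Implicit Arguments. Unset Strict Implicit. Unset Printing Implicit Defensive.
Import Order.TTheory GRing.Theory Num.Theory.
Local Open Scope ring_scope.

(* Let G(n, d) and F(n, d) be the sums of C(n, m), resp. of (m div 24) C(n, m), over
   m = d (mod 24).  The (r, s) entry of T_24^(n) is F(n, d) + [r < s] G(n, d) with
   d = r - s (mod 24).  In Z[e]/(e^2)[x]/(x^24 - 1 - e) the power (1 + x)^n equals
   sum_d (G(n, d) + e F(n, d)) x^d, so doubling n squares it: G(2n) is the cyclic
   self-convolution of G(n), and F(2n) is twice the convolution of F(n) with G(n) plus a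
   carry term.  For n = 3 2^(w+5) we show by induction on w that
   3 G(n, d) = g0 d + 2^(w+3) g1 d (mod 2^(w+6)) and 9 F(n, d) = t0 d + 2^(w+2) t1 d
   (mod 2^(w+5)), where t0, t1 are the Toeplitz sequences of T0, T1.  Since the
   convolution is symmetric, squaring doubles the modulus of a congruence, so the
   inductive step reduces to finitely many identities between the digit vectors; the base
   case n = 96 is computed modulo 64 by five doublings from n = 3. *)

Definition binsum (V : nmodType) (n : nat) (f : nat -> V) : V :=
  \sum_(m < n.+1) f m *+ 'C(n, m).

Section BinomialSums.

Variable V : nmodType.
Implicit Types (f g : nat -> V).

Lemma eq_binsum n f g : (forall m, (m <= n)%N -> f m = g m) ->
  binsum n f = binsum n g.
Proof. by move=> fg; apply: eq_bigr => m _; rewrite fg // -ltnS. Qed.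

Lemma binsumD n f g : binsum n (fun m => f m + g m) = binsum n f + binsum n g.
Proof. by rewrite -big_split; apply: eq_bigr => m _; rewrite mulrnDl. Qed.

Lemma binsum_sum (I : Type) (r : seq I) (P : pred I) n (F : I -> nat -> V) :
  binsum n (fun m => \sum_(i <- r | P i) F i m) = \sum_(i <- r | P i) binsum n (F i).
Proof.
by rewrite exchange_big; apply: eq_bigr => m _; rewrite sumrMnl.
Qed.

Lemma binsum0 f : binsum 0 f = f 0%N.
Proof. by rewrite /binsum big_ord_recl big_ord0 addr0. Qed.

Lemma binsumS n f : binsum n.+1 f = binsum n f + binsum n (fun m => f m.+1).
Proof.
rewrite /binsum big_ord_recl bin0 /=.
under eq_bigr => m _ do rewrite /bump /= add1n binS mulrnDr.
rewrite big_split /= addrA [in RHS]big_ord_recl /= bin0; congr (_ + _).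
by rewrite big_ord_recr /= bin_small // addr0.
Qed.

Lemma binsum_addn a b f :
  binsum (a + b) f = binsum a (fun j => binsum b (fun l => f (j + l)%N)).
Proof.
elim: b f => [|b IHb] f.
  by rewrite addn0; apply: eq_binsum => j _; rewrite binsum0 addn0.
rewrite addnS binsumS !IHb -binsumD; apply: eq_binsum => j _.
by rewrite binsumS; congr (_ + _); apply: eq_binsum => l _; rewrite addnS.
Qed.

End BinomialSums.

Section BinomialSumsRing.

Variable R : pzSemiRingType.
Implicit Types (f g : nat -> R).

Lemma binsumMl n c f : binsum n (fun m => c * f m) = c * binsum n f.
Proof. by rewrite /binsum mulr_sumr; apply: eq_bigr => m _; rewrite mulrnAr. Qed.

Lemma binsumMr n c f : binsum n (fun m => f m * c) = binsum n f * c.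
Proof. by rewrite /binsum mulr_suml; apply: eq_bigr => m _; rewrite mulrnAl. Qed.

Lemma binsum_mul a b f g :
  binsum a f * binsum b g = binsum a (fun j => binsum b (fun l => f j * g l)).
Proof. by rewrite -binsumMr; apply: eq_binsum => j _; rewrite binsumMl. Qed.

Lemma binsum_dirac n j : binsum n (fun m => (m == j)%:R) = 'C(n, j)%:R :> R.
Proof.
rewrite /binsum; have [jn | nj] := leqP j n.
  rewrite (bigD1 (Ordinal (jn : j < n.+1)%N)) //= eqxx big1 ?addr0 => [|m /negbTE].
    by rewrite mulr1n.
  by rewrite -val_eqE /= => ->; rewrite mul0rn.
rewrite bin_small // big1 // => m _.
by rewrite ltn_eqF ?mul0rn // (leq_trans (ltn_ord m)).
Qed.

End BinomialSumsRing.

(** * Residue classes modulo k *)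

Definition res_binsum (k n : nat) (u : nat -> int) (d : nat) : int :=
  binsum n (fun m => ((m %% k)%N == d)%:R * u m).

Local Notation resbin k n := (res_binsum k n (fun=> 1)).
Local Notation resbin_quo k n := (res_binsum k n (fun m => (m %/ k)%N%:Z)).

Definition resmul (k : nat) (w : nat -> nat -> int) (x y : nat -> int) : int :=
  \sum_(0 <= e1 < k) \sum_(0 <= e2 < k) w e1 e2 * x e1 * y e2.

Definition wconv (k d e1 e2 : nat) : int := ((e1 + e2) %% k == d)%N%:R.

Definition wcarry (k d e1 e2 : nat) : int :=
  ((e1 + e2) %% k == d)%N%:R * (k <= e1 + e2)%N%:R.

Section ResidueBilinear.

Variable k : nat.
Implicit Types (w : nat -> nat -> int) (x y : nat -> int).

Lemma wconv_sym d e1 e2 : wconv k d e1 e2 = wconv k d e2 e1.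
Proof. by rewrite /wconv addnC. Qed.

Lemma wcarry_sym d e1 e2 : wcarry k d e1 e2 = wcarry k d e2 e1.
Proof. by rewrite /wcarry addnC. Qed.

Lemma resmul_sym w x y : (forall e1 e2, w e1 e2 = w e2 e1) ->
  resmul k w x y = resmul k w y x.
Proof.
move=> wC; rewrite /resmul exchange_big_nat; apply: eq_bigr => e2 _.
by apply: eq_bigr => e1 _; rewrite wC mulrAC.
Qed.

Lemma resmulZ w a b x y :
  resmul k w (fun e => a * x e) (fun e => b * y e) = a * b * resmul k w x y.
Proof.
rewrite /resmul mulr_sumr; apply: eq_bigr => e1 _.
by rewrite mulr_sumr; apply: eq_bigr => e2 _; ring.
Qed.

Lemma resmul_expand w x1 y1 c1 x2 y2 c2 :
  resmul k w (fun e => x1 e + c1 * y1 e) (fun e => x2 e + c2 * y2 e) =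
  resmul k w x1 x2 + c2 * resmul k w x1 y2 + c1 * resmul k w y1 x2
  + c1 * c2 * resmul k w y1 y2.
Proof.
rewrite /resmul !mulr_sumr -!big_split; apply: eq_bigr => e1 _.
by rewrite !mulr_sumr -!big_split; apply: eq_bigr => e2 _ /=; ring.
Qed.

Lemma dvdz_resmul (M N : int) w x y :
  (forall e, (e < k)%N -> (M %| x e)%Z) -> (forall e, (e < k)%N -> (N %| y e)%Z) ->
  (M * N %| resmul k w x y)%Z.
Proof.
move=> Mx Ny; rewrite /resmul big_nat; apply: rpred_sum => e1 /andP [_ e1k].
rewrite big_nat; apply: rpred_sum => e2 /andP [_ e2k].
by rewrite -mulrA; apply/dvdz_mull/dvdz_mul; [apply: Mx | apply: Ny].
Qed.

Lemma resmul_congr (M : int) w x x' y y' :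
  (forall e, (e < k)%N -> (M %| x e - x' e)%Z) ->
  (forall e, (e < k)%N -> (M %| y e - y' e)%Z) ->
  (M %| resmul k w x y - resmul k w x' y')%Z.
Proof.
move=> xx' yy'.
have -> : resmul k w x y - resmul k w x' y' =
    resmul k w (fun e => x e - x' e) y + resmul k w x' (fun e => y e - y' e).
  rewrite /resmul -sumrB -big_split; apply: eq_bigr => e1 _.
  by rewrite -sumrB -big_split; apply: eq_bigr => e2 _ /=; ring.
apply: rpredD; [rewrite -[M]mulr1 | rewrite -[M]mul1r];
  by apply: dvdz_resmul => // e _; rewrite dvd1z.
Qed.

Lemma resmul_sqr_congr (M : int) w x x' :
  (forall e1 e2, w e1 e2 = w e2 e1) -> (2 * M %| M * M)%Z ->
  (forall e, (e < k)%N -> (M %| x e - x' e)%Z) ->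
  (2 * M %| resmul k w x x - resmul k w x' x')%Z.
Proof.
move=> wC MM xx'; set dx := fun e => x e - x' e.
have -> : resmul k w x x - resmul k w x' x' =
    resmul k w dx dx + resmul k w dx x' + resmul k w x' dx.
  rewrite /resmul -sumrB -!big_split; apply: eq_bigr => e1 _.
  by rewrite -sumrB -!big_split; apply: eq_bigr => e2 _ /=; rewrite /dx; ring.
rewrite (resmul_sym x' dx wC) -addrA -mulr2n -[_ *+ 2]mulr_natl.
apply: rpredD; first by apply: dvdz_trans MM _; apply: dvdz_resmul.
apply: dvdz_mul => //; rewrite -[M]mulr1.
by apply: dvdz_resmul => // e _; rewrite dvd1z.
Qed.

End ResidueBilinear.

Section ResidueBinomialSums.

Variable k : nat.
Hypothesis k_gt0 : (0 < k)%N.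

Lemma sum_mod_dirac j (F : nat -> int) :
  \sum_(0 <= e < k) ((j %% k)%N == e)%:R * F e = F (j %% k)%N.
Proof.
under eq_bigr do rewrite mulr_natl mulrb eq_sym.
by rewrite -big_mkcond big_nat1_eq /= ltn_pmod.
Qed.

Lemma resmul_res_binsum a b u v w :
  resmul k w (res_binsum k a u) (res_binsum k b v) =
  binsum a (fun j => binsum b (fun l => w (j %% k)%N (l %% k)%N * (u j * v l))).
Proof.
transitivity (\sum_(0 <= e1 < k) \sum_(0 <= e2 < k) binsum a (fun j => binsum b
    (fun l => w e1 e2 * (((j %% k)%N == e1)%:R * u j) * (((l %% k)%N == e2)%:R * v l)))).
  apply: eq_bigr => e1 _; apply: eq_bigr => e2 _.
  by rewrite -binsum_mul binsumMl.
under eq_bigr do rewrite -binsum_sum.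
rewrite -binsum_sum; apply: eq_binsum => j _.
under eq_bigr do rewrite -binsum_sum.
rewrite -binsum_sum; apply: eq_binsum => l _.
rewrite -(sum_mod_dirac j (fun e1 => w e1 (l %% k)%N * (u j * v l))).
apply: eq_bigr => e1 _; rewrite -(sum_mod_dirac l (fun e2 => w e1 e2 * (u j * v l))).
by rewrite mulr_sumr; apply: eq_bigr => e2 _; ring.
Qed.

Lemma res_binsum_small n u d : (n < k)%N -> (d < k)%N ->
  res_binsum k n u d = u d * 'C(n, d)%:R.
Proof.
move=> nk dk; rewrite -binsum_dirac -binsumMl; apply: eq_binsum => m mn.
rewrite modn_small ?(leq_ltn_trans mn) //.
by case: eqP => [->|_]; rewrite ?mul1r ?mulr1 ?mul0r ?mulr0.
Qed.

Lemma resbin_addn a b d :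
  resbin k (a + b) d = resmul k (wconv k d) (resbin k a) (resbin k b).
Proof.
rewrite resmul_res_binsum /res_binsum binsum_addn; apply: eq_binsum => j _.
by apply: eq_binsum => l _; rewrite /wconv modnDm !mulr1.
Qed.

Lemma resbin_quo_addn a b d :
  resbin_quo k (a + b) d =
  resmul k (wconv k d) (resbin_quo k a) (resbin k b)
  + resmul k (wconv k d) (resbin k a) (resbin_quo k b)
  + resmul k (wcarry k d) (resbin k a) (resbin k b).
Proof.
rewrite !resmul_res_binsum -!binsumD /res_binsum binsum_addn; apply: eq_binsum => j _.
rewrite -!binsumD; apply: eq_binsum => l _.
by rewrite /wconv /wcarry modnDm divnD // !PoszD !natz; ring.
Qed.

End ResidueBinomialSums.

(** * Entries of T_k^(i) *)

Lemma binzE i b : binz i b = binsum i (fun m => (b == m%:Z)%:R).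
Proof.
rewrite /binz; case: ltP => [b_lt0 | b_ge0].
  rewrite -[LHS](mul0r (binsum i (fun=> 1))) -binsumMl.
  by apply: eq_binsum => m _; case: eqP b_lt0 => // ->.
have -> : b = (`|b|%N)%:Z by lia.
rewrite -natz -(@binsum_dirac _ i `|b|%N).
by apply: eq_binsum => m _; rewrite eqz_nat eq_sym.
Qed.

Lemma mulz_small_eq0 (x y : int) (k : nat) : x * k%:Z = y -> `|y| < k%:Z -> x = 0.
Proof.
by move=> <-; rewrite normrM; case: (x =P 0) => // /eqP; rewrite -normr_gt0; nia.
Qed.

Section ToeplitzEntries.

Variable k : nat.

Lemma Tmat_index_eq (m r s : nat) (a : int) : (r < k)%N -> (s < k)%N ->
  (a * k%:Z + r%:Z - s%:Z == m%:Z) =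
  (a == (m %/ k + (r < s))%N%:Z) && ((m %% k)%N == (r + k - s) %% k)%N.
Proof.
move=> rk sk; have k_gt0 : (0 < k)%N by lia.
have := divn_eq m k; have := ltn_pmod m k_gt0.
set q := (m %/ k)%N; set c := (m %% k)%N => ck mE.
case: ltnP => [rs | sr] /=.
- have -> : ((r + k - s) %% k = r + k - s)%N by rewrite modn_small; lia.
  apply/eqP/andP => [aE | [/eqP aE /eqP cE]]; last by lia.
  have : a - q%:Z - 1 = 0 by apply: (@mulz_small_eq0 _ (c%:Z - (r + k - s)%N%:Z) k); lia.
  by split; apply/eqP; lia.
- have -> : ((r + k - s) %% k = r - s)%N by rewrite -addnBAC // modnDr modn_small; lia.
  apply/eqP/andP => [aE | [/eqP aE /eqP cE]]; last by lia.
  have : a - q%:Z = 0 by apply: (@mulz_small_eq0 _ (c%:Z - (r - s)%N%:Z) k); lia.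
  by split; apply/eqP; lia.
Qed.

Lemma Tmat_alpha_sum (i m r s : nat) : (m <= i)%N -> (r < k)%N -> (s < k)%N ->
  \sum_(0 <= t < (i + 1).*2.+1)
     (t%:Z - (i + 1)%:Z) * ((t%:Z - (i + 1)%:Z) * k%:Z + r%:Z - s%:Z == m%:Z)%:R =
  ((m %% k)%N == (r + k - s) %% k)%N%:R * (m %/ k + (r < s))%N%:Z.
Proof.
move=> mi rk sk; set t0 := (m %/ k + (r < s) + i + 1)%N.
have t0_lt : (t0 < (i + 1).*2.+1)%N.
  have : (m %/ k <= i)%N by apply: leq_trans (leq_div _ _) mi.
  by rewrite /t0; case: (r < s)%N => /=; lia.
under eq_bigr => t _.
  rewrite Tmat_index_eq // (_ : (_ == _) = (t == t0)); last by apply/eqP/eqP; lia.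
  rewrite -mulnb natrM mulrCA mulr_natl mulrb.
  over.
rewrite -big_mkcond big_nat1_eq t0_lt /t0; case: (r < s)%N;
  by rewrite ?PoszD /=; ring.
Qed.

Lemma Tmat_entry (i : nat) (r s : 'I_k) :
  Tmat k i r s =
  resbin_quo k i ((r + k - s) %% k)%N + (r < s)%N%:R * resbin k i ((r + k - s) %% k)%N.
Proof.
rewrite /Tmat mxE.
under eq_bigr => t _ do rewrite /= binzE -binsumMl.
rewrite -binsum_sum -binsumMl -binsumD; apply: eq_binsum => m mi.
rewrite Tmat_alpha_sum // PoszD natz; ring.
Qed.

End ToeplitzEntries.

(** * Two 2-adic digits for k = 24 *)

Definition g0 (d : nat) : int :=
  [:: 2; 0; 0; 0; 0; 0; 0; 0; -1; 0; 0; 0; 0; 0; 0; 0; -1; 0; 0; 0; 0; 0; 0; 0]`_d.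
Definition g1 (d : nat) : int :=
  [:: 6; 4; 2; 4; 1; 4; 6; 4; 1; 0; 0; 0; 6; 0; 0; 0; 1; 4; 6; 4; 1; 4; 2; 4]`_d.

Definition t0_lo (d : nat) : int :=
  [:: 0; 0; 0; 0; 0; 0; 0; 0; 1; 0; 0; 0; 0; 0; 0; 0; 2; 0; 0; 0; 0; 0; 0; 0]`_d.
Definition t0_up (d : nat) : int :=
  [:: 0; 0; 0; 0; 0; 0; 0; -1; 0; 0; 0; 0; 0; 0; 0; -2; 0; 0; 0; 0; 0; 0; 0]`_d.
Definition t1_lo (d : nat) : int :=
  [:: 3; 0; 0; 0; 4; 0; 0; 0; 3; 0; 4; 0; 6; 0; 4; 0; 4; 0; 4; 0; 6; 0; 4; 0]`_d.
Definition t1_up (d : nat) : int :=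
  [:: 0; 0; 0; 4; 0; 0; 0; 2; 0; 4; 0; 2; 0; 4; 0; 1; 0; 4; 0; 2; 0; 4; 0]`_d.

Definition G_digits (w n : nat) : Prop := forall d, (d < 24)%N ->
  (64 * 2 ^+ w %| 3 * resbin 24 n d - (g0 d + 8 * 2 ^+ w * g1 d))%Z.

Definition F_digits (w n : nat) : Prop := forall d, (d < 24)%N ->
  (32 * 2 ^+ w %| 9 * resbin_quo 24 n d - (t0_lo d + 4 * 2 ^+ w * t1_lo d))%Z.

Local Notation conv24 d := (resmul 24 (wconv 24 d)).
Local Notation carry24 d := (resmul 24 (wcarry 24 d)).

Lemma all_iota_ltP n (P : pred nat) : all P (iota 0 n) -> forall d, (d < n)%N -> P d.
Proof. by move=> /allP Pn d dn; apply: Pn; rewrite mem_iota. Qed.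

Lemma G_digits_checks d : (d < 24)%N ->
  [&& conv24 d g0 g0 == 3 * g0 d,
      (8 %| conv24 d g0 g1 - 3 * g1 d)%Z &
      (2 %| conv24 d g1 g1)%Z].
Proof. by move: d; apply: all_iota_ltP; rewrite /resmul unlock; vm_compute. Qed.

Lemma F_digits_checks d : (d < 24)%N ->
  (2 * conv24 d t0_lo g0 + 3 * carry24 d g0 g0 == 3 * t0_lo d)
  && (8 %| 2 * conv24 d t0_lo g1 + conv24 d t1_lo g0
           + 6 * carry24 d g0 g1 - 3 * t1_lo d)%Z.
Proof. by move: d; apply: all_iota_ltP; rewrite /resmul unlock; vm_compute. Qed.

Lemma superdiag_checks d : (d < 24)%N -> (0 < d)%N ==>
  (t0_up (23 - d) == t0_lo d + 3 * g0 d) && (8 %| t1_up (23 - d) - t1_lo d - 6 * g1 d)%Z.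
Proof. by move: d; apply: all_iota_ltP; vm_compute. Qed.

Lemma G_digits_double w n : G_digits w n -> G_digits w.+1 (n + n).
Proof.
move=> Gn d d24; rewrite exprS; set p := 2 ^+ w.
have /and3P [/eqP c00 c01 c11] := G_digits_checks d24.
have [z01 E01] := dvdzP c01; have [z11 E11] := dvdzP c11.
have cop : coprimez (64 * (2 * p)) 3 by rewrite !coprimezMl coprimezXl.
rewrite -(Gauss_dvdzr _ cop).
pose h e := g0 e + 8 * p * g1 e.
have -> : 3 * (3 * resbin 24 (n + n) d - (g0 d + 8 * (2 * p) * g1 d)) =
    (conv24 d (fun e => 3 * resbin 24 n e) (fun e => 3 * resbin 24 n e)
     - conv24 d h h) + (conv24 d h h - 3 * (g0 d + 16 * p * g1 d)).
  by rewrite resbin_addn // resmulZ; ring.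
apply: rpredD.
  rewrite (_ : 64 * (2 * p) = 2 * (64 * p)); last by ring.
  apply: resmul_sqr_congr; [exact: wconv_sym | | exact: Gn].
  by apply/dvdzP; exists (32 * p); ring.
rewrite resmul_expand (resmul_sym 24 g1 g0 (@wconv_sym 24 d)) c00 E11.
rewrite -[conv24 d g0 g1](subrK (3 * g1 d)) E01.
by apply/dvdzP; exists (z01 + p * z11); ring.
Qed.

Lemma F_digits_double w n : G_digits w n -> F_digits w n -> F_digits w.+1 (n + n).
Proof.
move=> Gn Fn d d24; rewrite exprS; set p := 2 ^+ w.
have /andP [/eqP c0 c1] := F_digits_checks d24.
have [z E1] := dvdzP c1.
have cop : coprimez (32 * (2 * p)) 3 by rewrite !coprimezMl coprimezXl.
rewrite -(Gauss_dvdzr _ cop).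
pose X e := 3 * resbin 24 n e; pose Y e := 9 * resbin_quo 24 n e.
pose h e := g0 e + 8 * p * g1 e; pose a e := t0_lo e + 4 * p * t1_lo e.
have -> : 3 * (9 * resbin_quo 24 (n + n) d - (t0_lo d + 4 * (2 * p) * t1_lo d)) =
    2 * (conv24 d Y X - conv24 d a h)
    + 3 * (carry24 d X X - carry24 d h h)
    + (2 * conv24 d a h + 3 * carry24 d h h
       - 3 * (t0_lo d + 8 * p * t1_lo d)).
  rewrite resbin_quo_addn // (resmul_sym 24 (resbin 24 n) _ (@wconv_sym 24 d)).
  by rewrite !resmulZ; ring.
have Xh e : (e < 24)%N -> (64 * p %| X e - h e)%Z by exact: Gn.
apply: rpredD; first apply: rpredD.
- rewrite (_ : 32 * (2 * p) = 2 * (32 * p)); last by ring.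
  apply/dvdz_mul/resmul_congr => // e e24.
  by apply: dvdz_trans (Xh e e24); apply/dvdzP; exists 2; ring.
- rewrite (_ : 32 * (2 * p) = 1 * (64 * p)); last by ring.
  by apply/dvdz_mul/resmul_congr; rewrite ?dvd1z.
rewrite !resmul_expand (resmul_sym 24 g1 g0 (@wcarry_sym 24 d)).
set E := (Q in (_ %| Q)%Z).
have -> : E = (2 * conv24 d t0_lo g0 + 3 * carry24 d g0 g0 - 3 * t0_lo d)
    + 8 * p * (2 * conv24 d t0_lo g1 + conv24 d t1_lo g0 + 6 * carry24 d g0 g1
               - 3 * t1_lo d)
    + 64 * p * p * (conv24 d t1_lo g1 + 3 * carry24 d g1 g1) by rewrite /E; ring.
rewrite c0 subrr add0r E1.
by apply/dvdzP; exists (z + p * (conv24 d t1_lo g1 + 3 * carry24 d g1 g1)); ring.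
Qed.

Lemma digits_superdiag w n d : G_digits w n -> F_digits w n -> (0 < d < 24)%N ->
  (32 * 2 ^+ w %| 9 * (resbin_quo 24 n d + resbin 24 n d)
                   - (t0_up (23 - d) + 4 * 2 ^+ w * t1_up (23 - d)))%Z.
Proof.
move=> Gn Fn /andP [d_gt0 d24]; set p := 2 ^+ w.
have /implyP/(_ d_gt0)/andP [/eqP up0 up1] := superdiag_checks d24.
rewrite up0; set E := (Q in (_ %| Q)%Z).
have -> : E = (9 * resbin_quo 24 n d - (t0_lo d + 4 * p * t1_lo d))
    + 3 * (3 * resbin 24 n d - (g0 d + 8 * p * g1 d))
    - 4 * p * (t1_up (23 - d) - t1_lo d - 6 * g1 d) by rewrite /E; ring.
apply: rpredB; first apply: rpredD.
- exact: Fn.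
- by apply/dvdz_mull/(dvdz_trans _ (Gn d d24))/dvdzP; exists 2; ring.
- by rewrite (_ : 32 * p = 4 * p * 8); [apply: dvdz_mul | ring].
Qed.

Definition double_mod64 (t : seq int * seq int) : seq int * seq int :=
  let x := nth 0 t.1 in let y := nth 0 t.2 in
  (mkseq (fun d => (conv24 d x x %% 64)%Z) 24,
   mkseq (fun d => ((2 * conv24 d y x + carry24 d x x) %% 64)%Z) 24).

Definition table (j : nat) : seq int * seq int :=
  iter j double_mod64 (mkseq (fun d => 'C(3, d)%:Z) 24, nseq 24 0).

Lemma dvdz_subr_modz (m x : int) : (m %| x - (x %% m)%Z)%Z.
Proof. by apply/dvdzP; exists (x %/ m)%Z; rewrite {1}(divz_eq x m) addrK. Qed.

Lemma table_congr j :
  (forall d, (d < 24)%N -> (64 %| resbin 24 (3 * 2 ^ j) d - (table j).1`_d)%Z) /\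
  (forall d, (d < 24)%N -> (64 %| resbin_quo 24 (3 * 2 ^ j) d - (table j).2`_d)%Z).
Proof.
elim: j => [|j [IHG IHF]].
  split=> d d24; rewrite res_binsum_small // ?nth_mkseq ?nth_nseq ?if_same //.
    by rewrite mul1r natz subrr dvdz0.
  by rewrite divn_small // mul0r subrr dvdz0.
rewrite expnS mulnCA mul2n -addnn /table iterS -/(table j) /=.
set n := (3 * 2 ^ j)%N; set x := nth 0 (table j).1; set y := nth 0 (table j).2.
split=> d d24; rewrite nth_mkseq //.
  rewrite resbin_addn // -(subrKA (conv24 d x x)).
  by apply: rpredD; [apply: resmul_congr | apply: dvdz_subr_modz].
rewrite resbin_quo_addn // (resmul_sym 24 (resbin 24 n) _ (@wconv_sym 24 d)).
rewrite -(subrKA (2 * conv24 d y x + carry24 d x x)).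
apply: rpredD; last exact: dvdz_subr_modz.
have -> : forall A B C D : int, A + A + B - (2 * C + D) = 2 * (A - C) + (B - D).
  by move=> *; ring.
by apply: rpredD; [apply: dvdz_mull | ]; apply: resmul_congr.
Qed.

Lemma table_5E : table 5 =
  ([:: 38; 32; 48; 32; 24; 32; 16; 32; 45; 0; 0; 0;
       16; 0; 0; 0; 45; 32; 16; 32; 24; 32; 48; 32],
   [:: 12; 0; 32; 0; 16; 0; 32; 0; 5; 32; 48; 32;
       56; 32; 16; 32; 2; 32; 16; 32; 56; 32; 48; 32]).
Proof. by rewrite /table /double_mod64 /resmul unlock; vm_compute. Qed.

Lemma table_digits d : (d < 24)%N ->
  (64 %| 3 * (table 5).1`_d - (g0 d + 8 * g1 d))%Z &&
  (32 %| 9 * (table 5).2`_d - (t0_lo d + 4 * t1_lo d))%Z.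
Proof. by rewrite table_5E; move: d; apply: all_iota_ltP; vm_compute. Qed.

Lemma digits_3_pow2 w : G_digits w (3 * 2 ^ (w + 5)) /\ F_digits w (3 * 2 ^ (w + 5)).
Proof.
elim: w => [|w [Gw Fw]].
  have [tG tF] := table_congr 5.
  split=> d d24; have /andP [dG dF] := table_digits d24; rewrite expr0 !mulr1.
    rewrite -(subrKA (3 * (table 5).1`_d)) -mulrBr.
    by apply: rpredD => //; apply/dvdz_mull/tG.
  rewrite -(subrKA (9 * (table 5).2`_d)) -mulrBr.
  apply: rpredD => //; apply/dvdz_mull/(dvdz_trans _ (tF d d24)).
  by apply/dvdzP; exists 2.
rewrite addSn expnS mulnCA mul2n -addnn.
by split; [apply: G_digits_double | apply: F_digits_double].
Qed.

Theorem theorem9 (u : nat) (hu : (5 <= u)%N) :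
  mx_congr (2%:Z ^+ u)
    (9%:Z *: Tmat 24 (3 * 2 ^ u))
    (T0 + (2%:Z ^+ (u - 3)) *: T1).
Proof.
have [w ->] : exists w, u = (w + 5)%N by exists (u - 5)%N; lia.
have [Gw Fw] := digits_3_pow2 w.
have -> : 2%:Z ^+ (w + 5) = 32 * 2 ^+ w by rewrite exprD mulrC.
have -> : 2%:Z ^+ (w + 5 - 3) = 4 * 2 ^+ w by rewrite -addnBA // exprD mulrC.
move=> r s; rewrite mxE Tmat_entry /T0 /T1 /Toepl !mxE; apply/eqP; rewrite eqz_mod_dvd.
have := ltn_ord r; have := ltn_ord s; case: (leqP s r) => [sr | rs] s24 r24.
  rewrite mul0r addr0 (_ : (r + 24 - s) %% 24 = r - s)%N; last by lia.
  by apply: Fw; lia.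
rewrite mul1r (_ : (s - r).-1 = 23 - (r + 24 - s) %% 24)%N; last by lia.
by apply: digits_superdiag => //; lia.
Qed.
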